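(* Let $G$ be a connected threshold graph of order $n\ge 4$ and size $m$ with $n-1<m<\binom{n}{2}$, let $c$ be its number of type 1 vertices, $(b_1,\ldots,b_z)$ its backwards zero position sequence, $F_1=\sum_{i=1}^z b_i^2$, and $\rho$ the spectral radius of its adjacency matrix. Then the greatest real root $\xi$ of the polynomial $x^3-(c+1)x^2+cx-F_1$ satisfies $\xi\le 1+\rho$.
   Context: A threshold graph is a simple graph whose vertices can be ordered $v_1,\ldots,v_n$ so that for each $2\le i\le n$, $v_i$ is either adjacent to all of $v_1,\ldots,v_{i-1}$ (then $a_i=1$) or to none of them (then $a_i=0$); by convention $a_1=1$. Vertex $v_i$ is of type 1 if $a_i=1$ and of type 0 if $a_i=0$; $c$ and $z$ are the numbers of type 1 and type 0 vertices ($c+z=n$). The backwards zero position sequence $(b_1,\ldots,b_z)$ is defined by letting $b_i$ be the number of type 1 vertices appearing after the $i$-th type 0 vertex in the order $v_1,\ldots,v_n$. *)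

From HB Require Import structures.
From mathcomp Require Import all_boot all_order all_algebra.
From mathcomp Require Import reals.
Set Implicit Arguments. Unset Strict Implicit. Unset Printing Implicit Defensive.
Import Order.TTheory GRing.Theory Num.Theory.

(* A threshold graph is given by its creation sequence s = (a_1,...,a_n)
   (a_1 = true by convention). Vertices are 'I_n, vertex i stands for v_{i+1}.
   For i < j, v_i ~ v_j iff a_j = 1. *)
Definition tg_adj (n : nat) (s : seq bool) : rel 'I_n :=
  fun i j => (i != j) && nth false s (maxn i j).

Definition tg_connected (n : nat) (s : seq bool) : Prop :=
  forall x y : 'I_n, connect (@tg_adj n s) x y.

Definition tg_size (n : nat) (s : seq bool) : nat :=
  #|[set e : 'I_n * 'I_n | (e.1 < e.2)%N && tg_adj s e.1 e.2]|.

Definition tg_c (s : seq bool) : nat := count id s.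

Definition tg_bzps (s : seq bool) : seq nat :=
  [seq count id (drop p.+1 s) | p <- iota 0 (size s) & ~~ nth false s p].

Definition tg_F1 (s : seq bool) : nat := \sum_(b <- tg_bzps s) b ^ 2.

Local Open Scope ring_scope.

Definition tg_adjmx (R : realType) (n : nat) (s : seq bool) : 'M[R]_n :=
  \matrix_(i, j) (tg_adj s i j)%:R.

(* r is the spectral radius of A: the maximum modulus of an eigenvalue
   (adjacency matrices are symmetric, so all eigenvalues are real). *)
Definition is_spectral_radius (R : realType) (n : nat) (A : 'M[R]_n) (r : R) :=
  (exists2 l, eigenvalue A l & `|l| = r) /\
  (forall l, eigenvalue A l -> `|l| <= r).

Definition tg_poly (R : realType) (s : seq bool) : {poly R} :=
  'X^3 - ((tg_c s).+1)%:R *: 'X^2 + (tg_c s)%:R *: 'X - ((tg_F1 s)%:R)%:P.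

Definition is_greatest_root (R : realType) (p : {poly R}) (xi : R) :=
  root p xi /\ (forall x, root p x -> x <= xi).

(* Put mu = xi - 1 (if xi <= 1 there is nothing to prove, as rho >= 0) and
   test the adjacency matrix A on the vector w equal to mu on type 1 vertices
   and to b_i on the i-th type 0 vertex.  Type 1 vertices form a clique and a
   type 0 vertex is adjacent exactly to the b_i type 1 vertices after it, so
   w.w = c mu^2 + F_1 and w.Aw = c (c - 1) mu^2 + 2 mu F_1.  Since xi is a root,
   F_1 = mu (mu + 1) (mu + 1 - c), whence w.Aw - mu w.w = mu^2 (mu + 1 - c)^2 >= 0,
   and by the Rayleigh principle A has an eigenvalue >= mu, so mu <= rho. *)

From HB Require Import structures.
From mathcomp Require Import all_boot all_order all_algebra.
From mathcomp Require Import reals spectral sesquilinear.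
From mathcomp.real_closed Require Import complex.
From mathcomp Require Import ring lra.
Import Order.TTheory GRing.Theory Num.Theory.
Set Implicit Arguments. Unset Strict Implicit. Unset Printing Implicit Defensive.
Local Open Scope ring_scope.
Local Open Scope sesquilinear_scope.
Local Open Scope complex_scope.

Section NormalForms.
Variables (C : numClosedFieldType) (n : nat).
Implicit Types (A P : 'M[C]_n) (y : 'rV[C]_n).

Lemma spectral_diag_eigenvalue A k :
  A \is normalmx -> eigenvalue A (spectral_diag A 0 k).
Proof.
move=> /orthomx_spectralP; set P := spectralmx A; set d := spectral_diag A => AE.
have PA : P *m A = diag_mx d *m P.
  by rewrite {1}AE !mulmxA mulmxV ?spectral_unit // mul1mx.
apply/eigenvalueP; exists (row k P).
  by rewrite -row_mul PA mul_diag_mx; apply/rowP => i; rewrite !mxE.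
rewrite rowE mulmx_free_eq0 ?row_free_unit ?spectral_unit //.
by apply/eqP => /matrixP/(_ 0 k); rewrite !mxE !eqxx => /eqP; rewrite oner_eq0.
Qed.

Lemma sqnorm_unitary P y : P \is unitarymx ->
  (y *m y^t*) 0 0 = \sum_k `|(y *m P^t*) 0 k| ^+ 2.
Proof.
move=> Pu; have -> : \sum_k `|(y *m P^t*) 0 k| ^+ 2 = (y *m P^t* *m (y *m P^t*)^t*) 0 0.
  by rewrite mxE; apply: eq_bigr => k _; rewrite normCK !mxE.
rewrite trmx_mul map_mxM trmxCK mulmxA -(mulmxA y) -invmx_unitary //.
by rewrite mulVmx ?unitarymx_unit // mulmx1.
Qed.

Lemma normal_quad_form_spectral A y : A \is normalmx ->
  (y *m A *m y^t*) 0 0 =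
  \sum_k spectral_diag A 0 k * `|(y *m (spectralmx A)^t*) 0 k| ^+ 2.
Proof.
move=> /orthomx_spectralP; set P := spectralmx A; set d := spectral_diag A => AE.
rewrite {1}AE invmx_unitary ?spectral_unitarymx //.
have -> : y *m (P^t* *m diag_mx d *m P) *m y^t* = y *m P^t* *m diag_mx d *m (y *m P^t*)^t*.
  by rewrite trmx_mul map_mxM trmxCK !mulmxA.
rewrite mxE; apply: eq_bigr => k _.
by rewrite mul_mx_diag !mxE normCK mulrCA mulrA.
Qed.

Lemma normal_quad_form_le A y l : A \is normalmx ->
  (forall k, spectral_diag A 0 k <= l) ->
  (y *m A *m y^t*) 0 0 <= l * (y *m y^t*) 0 0.
Proof.
move=> Anormal dl; rewrite normal_quad_form_spectral // (sqnorm_unitary _ (spectral_unitarymx A)).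
rewrite mulr_sumr; apply: ler_sum => k _.
by rewrite ler_wpM2r ?exprn_ge0.
Qed.

End NormalForms.

Lemma real_sqnorm_gt0 (R : realDomainType) n (x : 'rV[R]_n) :
  x != 0 -> 0 < (x *m x^T) 0 0.
Proof.
have term_ge0 k : 0 <= x 0 k * x^T k 0 by rewrite mxE -expr2 sqr_ge0.
move=> xN0; rewrite mxE lt_def psumr_eq0 ?sumr_ge0 ?andbT //.
apply: contra xN0 => /allP x0; apply/eqP/rowP => k; rewrite mxE.
by have := x0 k (mem_index_enum k); rewrite mxE mulf_eq0 orbb => /eqP.
Qed.

Lemma map_real_complex_trmxC (R : rcfType) m n (M : 'M[R]_(m, n)) :
  (map_mx (real_complex R) M)^t* = map_mx (real_complex R) M^T.
Proof. by apply/matrixP => i j; rewrite !mxE conj_Creal ?complex_real. Qed.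

(* The spectral theorem is only available over closed fields, so A is seen as
   a hermitian matrix over R[i]. *)
Lemma symmetric_eigenvalue_ge (R : rcfType) n (A : 'M[R]_n) (x : 'rV[R]_n) t :
  A^T = A -> x != 0 -> t * (x *m x^T) 0 0 <= (x *m A *m x^T) 0 0 ->
  exists2 l, eigenvalue A l & t <= l.
Proof.
case: n => [|n] in A x *; first by move=> _; rewrite (thinmx0 x) eqxx.
move=> symA xN0 tQ; set AC := map_mx (real_complex R) A.
have AChermi : AC \is hermsymmx.
  apply: realsym_hermsym.
    by apply/is_hermitianmxP; rewrite expr0 scale1r map_mx_id // /AC map_trmx symA.
  by apply/mxOverP => i j; rewrite mxE; apply/complex_realP; eexists.
set d := spectral_diag AC.
have dreal k : d 0 k = (complex.Re (d 0 k))%:C.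
  by rewrite RRe_real //; apply: (mxOverP (hermitian_spectral_diag_real AChermi)).
pose j := Order.arg_max ord0 xpredT (fun k => complex.Re (d 0 k)).
have dmax k : d 0 k <= d 0 j.
  by rewrite (dreal k) (dreal j) lecR /j; case: Order.TotalTheory.arg_maxP => // i _ /(_ k isT).
exists (complex.Re (d 0 j)).
  have := spectral_diag_eigenvalue j (hermitian_normalmx AChermi).
  by rewrite (dreal j) eigenvalue_map.
have Ql : (x *m A *m x^T) 0 0 <= complex.Re (d 0 j) * (x *m x^T) 0 0.
  have mapE (M : 'M_1) : (M 0 0)%:C = map_mx (real_complex R) M 0 0 by rewrite mxE.
  have := normal_quad_form_le (map_mx (real_complex R) x) (hermitian_normalmx AChermi) dmax.
  by rewrite !map_real_complex_trmxC -!map_mxM -!mapE (dreal j) -rmorphM lecR.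
by rewrite -(ler_pM2r (real_sqnorm_gt0 xN0)); apply: le_trans tQ Ql.
Qed.

Lemma tg_bzps_cons a s :
  tg_bzps (a :: s) = if a then tg_bzps s else count id s :: tg_bzps s.
Proof.
by rewrite /tg_bzps /= (iotaDl 1 0) filter_map; case: a => /=; rewrite -map_comp ?drop0.
Qed.

Lemma tg_F1_cons a s :
  tg_F1 (a :: s) = (tg_F1 s + (if a then 0 else count id s ^ 2))%N.
Proof. by rewrite /tg_F1 tg_bzps_cons; case: a; rewrite ?big_cons ?addn0 // addnC. Qed.

Section TestVector.
Variables (R : comPzRingType) (mu : R).

Definition tg_weight (s : seq bool) (i : nat) : R :=
  if nth false s i then mu else (count id (drop i.+1 s))%:R.

Lemma tg_weight_sqr_sum s :
  \sum_(0 <= i < size s) tg_weight s i ^+ 2 = (tg_c s)%:R * mu ^+ 2 + (tg_F1 s)%:R.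
Proof.
elim: s => [|a s IH]; first by rewrite big_nil /tg_F1 big_nil mul0r addr0.
rewrite big_nat_recl //= IH tg_F1_cons /tg_weight /= drop0.
by case: a; rewrite /= ?natrD ?natrX; ring.
Qed.

Lemma tg_weight_type1_sum s :
  \sum_(0 <= j < size s) (nth false s j)%:R * tg_weight s j = mu * (tg_c s)%:R.
Proof.
elim: s => [|a s IH]; first by rewrite big_nil mulr0.
rewrite big_nat_recl //= IH /tg_weight /=.
by case: a; rewrite /= ?natrD; ring.
Qed.

Definition tg_adj_form (s : seq bool) (w : nat -> R) : R :=
  \sum_(0 <= j < size s) \sum_(0 <= i < size s)
     w i * ((i != j) && nth false s (maxn i j))%:R * w j.

Lemma tg_adj_form_cons a s w :
  tg_adj_form (a :: s) w = tg_adj_form s (fun i => w i.+1)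
    + 2 * w 0%N * \sum_(0 <= j < size s) (nth false s j)%:R * w j.+1.
Proof.
(* v_0 precedes all other vertices, so its neighbours are the type 1 vertices of s. *)
have inner j : \sum_(0 <= i < (size s).+1)
      w i * ((i != j.+1) && nth false (a :: s) (maxn i j.+1))%:R * w j.+1
    = w 0%N * (nth false s j)%:R * w j.+1 +
      \sum_(0 <= i < size s) w i.+1 * ((i != j) && nth false s (maxn i j))%:R * w j.+1.
  by rewrite big_nat_recl //=; congr (_ + _); apply: eq_bigr => i _; rewrite eqSS maxnSS.
rewrite /tg_adj_form /= big_nat_recl // big_nat_recl //= mulr0 mul0r add0r.
rewrite (eq_bigr _ (fun j _ => inner j)) big_split /= addrCA addrA -big_split /=.
rewrite addrC mulr_sumr; congr (_ + _); apply: eq_bigr => i _; ring.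
Qed.

Lemma tg_adj_form_weight s :
  tg_adj_form s (tg_weight s)
  = mu ^+ 2 * ((tg_c s)%:R * ((tg_c s)%:R - 1)) + 2 * mu * (tg_F1 s)%:R.
Proof.
elim: s => [|a s IH]; first by rewrite /tg_adj_form big_nil /tg_F1 big_nil /=; ring.
rewrite tg_adj_form_cons IH tg_weight_type1_sum tg_F1_cons /tg_weight /= drop0.
by case: a; rewrite /= ?natrD ?natrX ?addn0; ring.
Qed.

End TestVector.

Definition tg_weightv (R : realType) (mu : R) (s : seq bool) : 'rV[R]_(size s) :=
  \row_i tg_weight mu s i.

Section WeightVector.
Variables (R : realType) (mu : R) (s : seq bool).
Let w := tg_weightv mu s.

Lemma tg_weightv_norm :
  (w *m w^T) 0 0 = (tg_c s)%:R * mu ^+ 2 + (tg_F1 s)%:R.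
Proof.
rewrite -tg_weight_sqr_sum mxE big_mkord.
by apply: eq_bigr => i _; rewrite !mxE expr2.
Qed.

Lemma tg_weightv_form :
  (w *m tg_adjmx R (size s) s *m w^T) 0 0
  = mu ^+ 2 * ((tg_c s)%:R * ((tg_c s)%:R - 1)) + 2 * mu * (tg_F1 s)%:R.
Proof.
rewrite -tg_adj_form_weight /tg_adj_form mxE big_mkord; apply: eq_bigr => j _.
rewrite big_mkord !mxE mulr_suml; apply: eq_bigr => i _.
by rewrite !mxE.
Qed.

End WeightVector.

Lemma tg_weightv_neq0 (R : realType) (mu : R) s :
  nth false s 0 -> mu != 0 -> tg_weightv mu s != 0.
Proof.
case: s => [|[] s] //= _ mu_neq0.
by apply: contra_neq mu_neq0 => /rowP/(_ ord0); rewrite !mxE.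
Qed.

Lemma tg_adjmx_sym (R : realType) n s : (tg_adjmx R n s)^T = tg_adjmx R n s.
Proof. by apply/matrixP => i j; rewrite !mxE /tg_adj eq_sym maxnC. Qed.

Lemma root_tg_poly (R : realType) s x :
  root (tg_poly R s) x = (x * (x - 1) * (x - (tg_c s)%:R) == (tg_F1 s)%:R).
Proof.
rewrite /root /tg_poly !hornerE /= subr_eq0 -natr1.
by congr (_ == _); ring.
Qed.

Lemma tg_weightv_rayleigh (R : realType) (mu : R) s :
  root (tg_poly R s) (mu + 1) ->
  mu * (tg_weightv mu s *m (tg_weightv mu s)^T) 0 0
  <= (tg_weightv mu s *m tg_adjmx R (size s) s *m (tg_weightv mu s)^T) 0 0.
Proof.
rewrite root_tg_poly addrK tg_weightv_norm tg_weightv_form -subr_ge0 => /eqP <-.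
set c : R := (tg_c s)%:R.
suff -> : mu ^+ 2 * (c * (c - 1)) + 2 * mu * ((mu + 1) * mu * (mu + 1 - c))
  - mu * (c * mu ^+ 2 + (mu + 1) * mu * (mu + 1 - c)) = (mu * (mu + 1 - c)) ^+ 2.
  exact: sqr_ge0.
ring.
Qed.

Theorem theorem4p1 (R : realType) (n : nat) (s : seq bool) (rho xi : R) :
  size s = n -> nth false s 0 = true -> (4 <= n)%N ->
  tg_connected n s ->
  (n.-1 < tg_size n s < 'C(n, 2))%N ->
  is_spectral_radius (tg_adjmx R n s) rho ->
  is_greatest_root (tg_poly R s) xi ->
  xi <= 1 + rho.
Proof.
move=> <- s0 _ _ _ [[l0 _ <-] rho_max] [xi_root _].
have [xi_le1 | xi_gt1] := lerP xi 1.
  by rewrite (le_trans xi_le1) // lerDl.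
have mu_neq0 : xi - 1 != 0 by rewrite subr_eq0 gt_eqF.
have mu_root : root (tg_poly R s) (xi - 1 + 1) by rewrite subrK.
have [l l_eigen mu_le_l] := symmetric_eigenvalue_ge (tg_adjmx_sym R (size s) s)
  (tg_weightv_neq0 s0 mu_neq0) (tg_weightv_rayleigh mu_root).
have := rho_max l l_eigen; have := ler_norm l.
by move: mu_le_l; lra.
Qed.
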